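(* Let $d\ge 2$, $\mathcal{X}\in\mathbb{C}^{n_1\times\cdots\times n_d}$ and $0<\epsilon<1$. Suppose that for each $1\le j\le d-1$ there are matrices $U_j\in\mathbb{C}^{(\prod_{i=1}^j n_i)\times r_j}$ with orthonormal columns and $V_j\in\mathbb{C}^{(\prod_{i=j+1}^d n_i)\times r_j}$ such that $\|X_j-U_jV_j^*\|_F\le \frac{\epsilon}{\sqrt{d-1}}\|\mathcal{X}\|_F$, where $X_j$ is the $j$th unfolding of $\mathcal{X}$. Set $r_0=r_d=1$ and define TT cores $\mathcal{G}_1=\operatorname{reshape}(U_1,1,n_1,r_1)$, $\mathcal{G}_d=\operatorname{reshape}(V_{d-1}^*,r_{d-1},n_d,1)$, and for $1\le k\le d-2$ \[\mathcal{G}_{k+1}=\operatorname{reshape}\Big(U_k^*\,\operatorname{reshape}\big(U_{k+1},\textstyle\prod_{i=1}^k n_i,\ n_{k+1}r_{k+1}\big),\ r_k,\ n_{k+1},\ r_{k+1}\Big).\] Then the tensor $\tilde{\mathcal{X}}$ with TT cores $\mathcal{G}_1,\dots,\mathcal{G}_d$ satisfies $\|\mathcal{X}-\tilde{\mathcal{X}}\|_F\le\epsilon\|\mathcal{X}\|_F$.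
   Context: $\operatorname{reshape}$ follows MATLAB semantics (column-major ordering preserved). The $j$th unfolding of $\mathcal{X}\in\mathbb{C}^{n_1\times\cdots\times n_d}$ is $X_j=\operatorname{reshape}(\mathcal{X},\prod_{s=1}^j n_s,\prod_{s=j+1}^d n_s)$. A tensor $\mathcal{Y}$ has TT cores $\mathcal{G}_k\in\mathbb{C}^{s_{k-1}\times n_k\times s_k}$ ($s_0=s_d=1$) if $\mathcal{Y}_{i_1,\dots,i_d}=\mathcal{G}_1(:,i_1,:)\mathcal{G}_2(:,i_2,:)\cdots\mathcal{G}_d(:,i_d,:)$ (a product of matrices) for all indices. $\|\cdot\|_F$ is the Frobenius norm (square root of the sum of squared moduli of all entries). *)

(* Complex scalars: an arbitrary numClosedFieldType C
   (e.g. C = R[i] for R : realType, i.e. the complex numbers). *)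
From HB Require Import structures.
From mathcomp Require Import all_boot all_order all_algebra.
Set Implicit Arguments. Unset Strict Implicit. Unset Printing Implicit Defensive.
Import Order.TTheory GRing.Theory Num.Theory.
Local Open Scope ring_scope.

Section TT.
Variable C : numClosedFieldType.

Definition adjmx m n (A : 'M[C]_(m, n)) : 'M[C]_(n, m) := (map_mx Num.conj A)^T.

(* Linear (column-major, MATLAB) data of arrays are stored as nat -> C;
   only the first (size) entries are meaningful.
   Since MATLAB reshape preserves column-major order, reshape is:
   - from a matrix to linear data: [vecmx]
   - from linear data to an m x n matrix: [mxof m n]. *)
Definition vecmx m n (A : 'M[C]_(m, n)) : nat -> C :=
  fun L => \sum_(a < m) \sum_(b < n) (if (a + m * b)%N == L then A a b else 0).

Definition mxof m n (x : nat -> C) : 'M[C]_(m, n) :=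
  \matrix_(a < m, b < n) x (a + m * b)%N.

Definition Pn (n : nat -> nat) (j : nat) : nat := (\prod_(1 <= i < j.+1) n i)%N.
Definition Qn (n : nat -> nat) (d j : nat) : nat := (\prod_(j.+1 <= i < d.+1) n i)%N.

Definition unfolding (n : nat -> nat) (d : nat) (X : nat -> C) (j : nat) :
  'M[C]_(Pn n j, Qn n d j) := mxof (Pn n j) (Qn n d j) X.

Definition frobmx m n (A : 'M[C]_(m, n)) : C :=
  sqrtC (\sum_(a < m) \sum_(b < n) `|A a b| ^+ 2).
Definition frobT (n : nat -> nat) (d : nat) (X : nat -> C) : C :=
  sqrtC (\sum_(L < Pn n d) `|X L| ^+ 2).

(* TT tensor with cores G k (k = 1..d), G k in C^{s(k-1) x n_k x s k}
   stored as linear column-major data. *)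
Section TTeval.
Variables (n : nat -> nat) (s : nat -> nat) (G : nat -> nat -> C).

Definition ttslice (k i : nat) : 'M[C]_(s k.-1, s k) :=
  \matrix_(a < s k.-1, b < s k) G k (a + s k.-1 * i + s k.-1 * n k * b)%N.

(* multi-index of linear position L (0-based, column-major): i_k *)
Definition ttidx (L k : nat) : nat := ((L %/ Pn n k.-1) %% n k)%N.

Fixpoint ttpref (L k : nat) : 'M[C]_(1, s k) :=
  match k return 'M[C]_(1, s k) with
  | 0 => const_mx 1
  | k'.+1 => ttpref L k' *m ttslice k'.+1 (ttidx L k'.+1)
  end.

(* entry at linear position L; the 1 x s d matrix (s d = 1) is read off
   by summing its (single) entry *)
Definition tteval (d : nat) (L : nat) : C := \sum_(b < s d) ttpref L d 0 b.
End TTeval.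

Definition rk (d : nat) (r : nat -> nat) (k : nat) : nat :=
  if (k == 0)%N || (k == d)%N then 1%N else r k.

Definition thm_cores (n : nat -> nat) (d : nat) (r : nat -> nat)
  (U : forall j, 'M[C]_(Pn n j, r j)) (V : forall j, 'M[C]_(Qn n d j, r j))
  (k : nat) : nat -> C :=
  if k == 1%N then vecmx (U 1%N)
  else if k == d then vecmx (adjmx (V d.-1))
  else vecmx (adjmx (U k.-1) *m mxof (Pn n k.-1) (n k * r k) (vecmx (U k))).

End TT.

From mathcomp Require Import all_boot all_order all_algebra zify ring.
Import Order.TTheory GRing.Theory Num.Theory.
Local Open Scope ring_scope.
Set Implicit Arguments. Unset Strict Implicit. Unset Printing Implicit Defensive.

(* Sweep from right to left: Z_{d-1} = U_{d-1} V_{d-1}^* and Z_m = U_m U_m^* Z_{m+1},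
   the projection acting on the m-th unfolding.  As U_m U_m^* is an orthogonal
   projection, ||X - Z_m||^2 <= ||X - U_m U_m^* X||^2 + ||X - Z_{m+1}||^2, and the
   first term is at most ||X_m - U_m V_m^*||^2 by best approximation; hence
   ||X - Z_1||^2 <= (d-1) (eps ||X|| / sqrt(d-1))^2.  The TT tensor is Z_1: writing
   Z_m = U_m R_m, the core G_{m+1} contracted with R_{m+1} is R_m, and G_d = R_{d-1},
   so the product of the cores telescopes to U_1 R_1. *)

Lemma modn_colmaj p i j : (i < p)%N -> ((i + p * j) %% p = i)%N.
Proof. by move=> ltip; rewrite addnC mulnC modnMDl modn_small. Qed.

Lemma divn_colmaj p i j : (i < p)%N -> ((i + p * j) %/ p = j)%N.
Proof.
move=> ltip; have p_gt0 : (0 < p)%N by apply: leq_ltn_trans ltip.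
by rewrite addnC mulnC divnMDl // divn_small // addn0.
Qed.

Lemma eqn_colmaj p i j a b : (i < p)%N -> (a < p)%N ->
  (i + p * j == a + p * b)%N = (i == a) && (j == b).
Proof.
move=> ltip ltap; apply/eqP/andP => [E|[/eqP-> /eqP->]] //.
have := modn_colmaj j ltip; have := divn_colmaj j ltip.
by rewrite E modn_colmaj // divn_colmaj // => -> ->.
Qed.

Lemma ltn_colmaj p q a b : (a < p)%N -> (b < q)%N -> (a + p * b < p * q)%N.
Proof. nia. Qed.

Lemma big_nat_colmaj (R : nmodType) (F : nat -> R) p q :
  \sum_(0 <= L < p * q) F L = \sum_(0 <= b < q) \sum_(0 <= a < p) F (a + p * b)%N.
Proof.
elim: q => [|q IHq]; first by rewrite muln0 !big_geq.
rewrite big_nat_recr //= -IHq mulnS addnC (big_cat_nat _ (leq_addr _ _)) //=.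
by congr (_ + _); rewrite -{1}[(p * q)%N]add0n big_addn addKn.
Qed.

Section Reshape.
Variable C : numClosedFieldType.

Lemma vecmxE p q (A : 'M[C]_(p, q)) (a : 'I_p) (b : 'I_q) :
  vecmx A (a + p * b)%N = A a b.
Proof.
rewrite /vecmx (bigD1 a) //= (bigD1 b) //= eqxx big1 ?addr0 => [|j /negPf nejb].
  rewrite big1 ?addr0 // => i /negPf neia; apply: big1 => j _.
  by rewrite eqn_colmaj // val_eqE /= neia.
by rewrite eqn_colmaj // eqxx val_eqE /= nejb.
Qed.

Lemma vecmxK p q : cancel (@vecmx C p q) (mxof p q).
Proof. by move=> A; apply/matrixP => i j; rewrite mxE vecmxE. Qed.

Lemma vecmx_mxof p q (v : nat -> C) a b : (a < p)%N -> (b < q)%N ->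
  vecmx (mxof p q v) (a + p * b)%N = v (a + p * b)%N.
Proof.
by move=> ltap ltbq; rewrite (vecmxE _ (Ordinal ltap) (Ordinal ltbq)) mxE.
Qed.

Lemma mxofB p q (f g : nat -> C) :
  mxof p q (fun L => f L - g L) = mxof p q f - mxof p q g.
Proof. by apply/matrixP => i j; rewrite !mxE. Qed.

Lemma vecmx_adjmx p q (A : 'M[C]_(p, q)) a b : (a < p)%N -> (b < q)%N ->
  vecmx (adjmx A) (b + q * a)%N = (vecmx A (a + p * b)%N)^*.
Proof.
move=> ltap ltbq; rewrite (vecmxE _ (Ordinal ltbq) (Ordinal ltap)).
by rewrite (vecmxE _ (Ordinal ltap) (Ordinal ltbq)) !mxE.
Qed.

Lemma vecmx_mulmx p q k (A : 'M[C]_(p, q)) (B : 'M[C]_(q, k)) a c :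
  (a < p)%N -> (c < k)%N ->
  vecmx (A *m B) (a + p * c)%N =
  \sum_(0 <= b < q) vecmx A (a + p * b)%N * vecmx B (b + q * c)%N.
Proof.
move=> ltap ltck; rewrite (vecmxE _ (Ordinal ltap) (Ordinal ltck)) mxE big_mkord.
by apply: eq_bigr => b _; rewrite (vecmxE A (Ordinal ltap)) (vecmxE B _ (Ordinal ltck)).
Qed.

Lemma vecmx_mulmx_row q k (A : 'M[C]_(1, q)) (B : 'M[C]_(q, k)) c : (c < k)%N ->
  vecmx (A *m B) c = \sum_(0 <= b < q) vecmx A b * vecmx B (b + q * c)%N.
Proof.
move=> ltck; have := vecmx_mulmx A B (ltn0Sn 0) ltck; rewrite add0n mul1n => ->.
by apply: eq_big_nat => b _; rewrite add0n mul1n.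
Qed.

End Reshape.

Section Frobenius.
Variable C : numClosedFieldType.

Definition frob2 p q (A : 'M[C]_(p, q)) : C := \sum_(a < p) \sum_(b < q) `|A a b| ^+ 2.

Definition mxdot p q (A B : 'M[C]_(p, q)) : C := \tr (A *m adjmx B).

Lemma adjmxK p q : cancel (@adjmx C p q) (@adjmx C q p).
Proof. by move=> A; apply/matrixP => i j; rewrite !mxE conjCK. Qed.

Lemma adjmxM p q k (A : 'M[C]_(p, q)) (B : 'M[C]_(q, k)) :
  adjmx (A *m B) = adjmx B *m adjmx A.
Proof.
apply/matrixP => i j; rewrite !mxE rmorph_sum; apply: eq_bigr => l _.
by rewrite !mxE rmorphM mulrC.
Qed.

Lemma mxtrace_adjmx p (A : 'M[C]_p) : \tr (adjmx A) = (\tr A)^*.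
Proof. by rewrite mxtrace_tr rmorph_sum; apply: eq_bigr => i _; rewrite mxE. Qed.

Lemma mxdotC p q (A B : 'M[C]_(p, q)) : mxdot B A = (mxdot A B)^*.
Proof. by rewrite /mxdot -mxtrace_adjmx adjmxM adjmxK. Qed.

Lemma mxdot0l p q (A : 'M[C]_(p, q)) : mxdot 0 A = 0.
Proof. by rewrite /mxdot mul0mx mxtrace0. Qed.

Lemma mxdot0r p q (A : 'M[C]_(p, q)) : mxdot A 0 = 0.
Proof. by rewrite mxdotC mxdot0l conjC0. Qed.

Lemma mxdotDl p q (A B D : 'M[C]_(p, q)) : mxdot (A + B) D = mxdot A D + mxdot B D.
Proof. by rewrite /mxdot mulmxDl mxtraceD. Qed.

Lemma mxdotDr p q (A B D : 'M[C]_(p, q)) : mxdot D (A + B) = mxdot D A + mxdot D B.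
Proof. by rewrite mxdotC mxdotDl rmorphD /= -!mxdotC. Qed.

Lemma mxdot_mulmxl p q k (M : 'M[C]_(p, q)) (A : 'M[C]_(q, k)) (B : 'M[C]_(p, k)) :
  mxdot (M *m A) B = mxdot A (adjmx M *m B).
Proof. by rewrite /mxdot adjmxM adjmxK -mulmxA mxtrace_mulC mulmxA. Qed.

Lemma frob2_dot p q (A : 'M[C]_(p, q)) : frob2 A = mxdot A A.
Proof.
apply: eq_bigr => a _; rewrite mxE; apply: eq_bigr => b _.
by rewrite !mxE normCK.
Qed.

Lemma frobmxE p q (A : 'M[C]_(p, q)) : frobmx A = sqrtC (frob2 A).
Proof. by []. Qed.

Lemma frob2_ge0 p q (A : 'M[C]_(p, q)) : 0 <= frob2 A.
Proof. by apply: sumr_ge0 => a _; apply: sumr_ge0 => b _; rewrite exprn_ge0. Qed.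

Lemma frob2D_orth p q (A B : 'M[C]_(p, q)) :
  mxdot A B = 0 -> frob2 (A + B) = frob2 A + frob2 B.
Proof.
move=> AB0; have BA0 : mxdot B A = 0 by rewrite mxdotC AB0 conjC0.
by rewrite !frob2_dot mxdotDl !mxdotDr AB0 BA0 addr0 add0r.
Qed.

Lemma ler_sqrtC_sqr (x e : C) : 0 <= x -> 0 <= e -> (sqrtC x <= e) = (x <= e ^+ 2).
Proof. by move=> x_ge0 e_ge0; rewrite -{1}(sqrCK e_ge0) ler_sqrtC // nnegrE exprn_ge0. Qed.

End Frobenius.

Section OrthogonalProjection.
Variables (C : numClosedFieldType) (p k q : nat) (U : 'M[C]_(p, k)).
Hypothesis U_orthonormal : adjmx U *m U = 1%:M.

Lemma mxdot_proj_residual (A : 'M[C]_(p, q)) (W : 'M[C]_(k, q)) :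
  mxdot (A - U *m (adjmx U *m A)) (U *m W) = 0.
Proof.
rewrite mxdotC mxdot_mulmxl mulmxBr [adjmx U *m (U *m _)]mulmxA U_orthonormal mul1mx subrr.
by rewrite mxdot0r conjC0.
Qed.

Lemma frob2_proj_split (A : 'M[C]_(p, q)) (W : 'M[C]_(k, q)) :
  frob2 (A - U *m W) =
  frob2 (A - U *m (adjmx U *m A)) + frob2 (U *m (adjmx U *m A) - U *m W).
Proof.
rewrite -frob2D_orth ?addrA ?subrK // -mulmxBr.
exact: mxdot_proj_residual.
Qed.

Lemma frob2_proj_min (A : 'M[C]_(p, q)) (W : 'M[C]_(k, q)) :
  frob2 (A - U *m (adjmx U *m A)) <= frob2 (A - U *m W).
Proof. by rewrite [leRHS]frob2_proj_split lerDl frob2_ge0. Qed.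

Lemma frob2_proj_le (B : 'M[C]_(p, q)) : frob2 (U *m (adjmx U *m B)) <= frob2 B.
Proof.
have := frob2_proj_split B 0; rewrite mulmx0 !subr0 => ->.
by rewrite lerDr frob2_ge0.
Qed.

Lemma frob2_sub_proj (A B : 'M[C]_(p, q)) :
  frob2 (A - U *m (adjmx U *m B)) <=
  frob2 (A - U *m (adjmx U *m A)) + frob2 (A - B).
Proof. by rewrite frob2_proj_split lerD2l -!mulmxBr frob2_proj_le. Qed.

End OrthogonalProjection.

Section Unfolding.
Variables (n : nat -> nat) (d : nat).

Lemma Pn0 : Pn n 0 = 1%N.
Proof. by rewrite /Pn big_geq. Qed.

Lemma Pn1 : Pn n 1 = n 1%N.
Proof. by rewrite /Pn big_nat1. Qed.

Lemma PnS m : Pn n m.+1 = (Pn n m * n m.+1)%N.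
Proof. by rewrite /Pn big_nat_recr. Qed.

Lemma QnS m : (m < d)%N -> Qn n d m = (n m.+1 * Qn n d m.+1)%N.
Proof. by move=> ltmd; rewrite /Qn big_ltn. Qed.

Lemma PnQn m : (m <= d)%N -> (Pn n m * Qn n d m)%N = Pn n d.
Proof. by move=> lemd; rewrite /Pn /Qn -big_cat_nat. Qed.

Lemma PnQn_gt0 m L : (L < Pn n d)%N -> (m <= d)%N -> (0 < Pn n m)%N && (0 < Qn n d m)%N.
Proof.
move=> ltL lemd; have : (0 < Pn n d)%N by apply: leq_ltn_trans ltL.
by rewrite -(PnQn lemd) muln_gt0.
Qed.

Lemma ltn_divn_Pn m L : (L < Pn n d)%N -> (m <= d)%N -> (L %/ Pn n m < Qn n d m)%N.
Proof.
move=> ltL lemd; have /andP[P_gt0 _] := PnQn_gt0 ltL lemd.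
by rewrite ltn_divLR // mulnC PnQn.
Qed.

Lemma divn_Pn_succ m L : (m < d)%N -> (L < Pn n d)%N ->
  (L %/ Pn n m = ttidx n L m.+1 + n m.+1 * (L %/ Pn n m.+1))%N.
Proof.
move=> ltmd ltL; rewrite /ttidx /= PnS divnMA.
by rewrite [LHS](divn_eq (L %/ Pn n m) (n m.+1)) addnC mulnC.
Qed.

Lemma ltn_ttidx m L : (m < d)%N -> (L < Pn n d)%N -> (ttidx n L m.+1 < n m.+1)%N.
Proof.
move=> ltmd ltL; have /andP[P_gt0 _] := PnQn_gt0 ltL ltmd.
by move: P_gt0; rewrite PnS muln_gt0 => /andP[_ n_gt0]; rewrite ltn_pmod.
Qed.

Lemma ttidx_last L : (0 < d)%N -> (L < Pn n d)%N -> ttidx n L d = (L %/ Pn n d.-1)%N.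
Proof.
move=> d_gt0 ltL; have /andP[P_gt0 _] := PnQn_gt0 ltL (leq_pred d).
have := PnS d.-1; rewrite prednK // => PnSd.
by rewrite /ttidx modn_small // ltn_divLR // mulnC -PnSd.
Qed.

Definition tnorm2 (C : numClosedFieldType) (f : nat -> C) : C :=
  \sum_(L < Pn n d) `|f L| ^+ 2.

Lemma frobTE (C : numClosedFieldType) (f : nat -> C) : frobT n d f = sqrtC (tnorm2 f).
Proof. by []. Qed.

Lemma tnorm2_ge0 (C : numClosedFieldType) (f : nat -> C) : 0 <= tnorm2 f.
Proof. by apply: sumr_ge0 => L _; rewrite exprn_ge0. Qed.

Lemma tnorm2_unfolding (C : numClosedFieldType) (f : nat -> C) m : (m <= d)%N ->
  tnorm2 f = frob2 (mxof (Pn n m) (Qn n d m) f).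
Proof.
move=> lemd; rewrite /tnorm2 -(big_mkord xpredT (fun L => `|f L| ^+ 2)).
rewrite -(PnQn lemd) big_nat_colmaj.
rewrite exchange_big_nat /frob2 big_mkord; apply: eq_bigr => a _.
by rewrite big_mkord; apply: eq_bigr => b _; rewrite mxE.
Qed.

End Unfolding.

Section TTSVD.
Variables (C : numClosedFieldType) (d : nat) (n r : nat -> nat).
Variables (U : forall j, 'M[C]_(Pn n j, r j)) (V : forall j, 'M[C]_(Qn n d j, r j)).
Hypothesis d_gt1 : (1 < d)%N.

Local Notation s := (rk d r).
Local Notation G := (thm_cores U V).

(* [sweep t] is Z_(d-1-t): the recursion counts the projections already applied. *)
Fixpoint sweep (t : nat) : nat -> C :=
  if t is t'.+1 then
    vecmx (U (d.-1 - t) *m (adjmx (U (d.-1 - t)) *m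
             mxof (Pn n (d.-1 - t)) (Qn n d (d.-1 - t)) (sweep t')))
  else vecmx (U d.-1 *m adjmx (V d.-1)).

Definition approx m := sweep (d.-1 - m).

Definition rfactor m : 'M[C]_(r m, Qn n d m) :=
  if (m < d.-1)%N then adjmx (U m) *m mxof (Pn n m) (Qn n d m) (approx m.+1)
  else adjmx (V m).

Lemma approxE m : (m <= d.-1)%N -> approx m = vecmx (U m *m rfactor m).
Proof.
move=> lemd; rewrite /rfactor; case: ltnP => [ltmd | gemd].
  rewrite /approx -(subnSK ltmd) /= subnSK // subKn // mulmxA.
by rewrite /approx (@anti_leq m d.-1) ?lemd // subnn.
Qed.

Lemma approx_entry m c q : (m <= d.-1)%N -> (c < Pn n m)%N -> (q < Qn n d m)%N ->
  approx m (c + Pn n m * q)%N =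
  \sum_(0 <= b < r m) vecmx (U m) (c + Pn n m * b)%N * vecmx (rfactor m) (b + r m * q)%N.
Proof. by move=> lemd ltc ltq; rewrite approxE // vecmx_mulmx. Qed.

Lemma rfactor_entry m a q : (m < d.-1)%N -> (a < r m)%N -> (q < Qn n d m)%N ->
  vecmx (rfactor m) (a + r m * q)%N =
  \sum_(0 <= c < Pn n m) (vecmx (U m) (c + Pn n m * a)%N)^* * approx m.+1 (c + Pn n m * q)%N.
Proof.
move=> ltmd lta ltq; rewrite /rfactor ltmd vecmx_mulmx //.
by apply: eq_big_nat => c /andP[_ ltc]; rewrite vecmx_adjmx // vecmx_mxof.
Qed.

Lemma rk_mid m : (0 < m < d)%N -> s m = r m.
Proof. by rewrite /rk => /andP[m_gt0 ltmd]; rewrite gtn_eqF // ltn_eqF. Qed.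

Lemma core_first_entry i a : G 1 (i + n 1 * a)%N = vecmx (U 1) (i + Pn n 1 * a)%N.
Proof. by rewrite /thm_cores /=; apply: congr1; rewrite Pn1. Qed.

Lemma core_last_entry a i :
  G d (a + r d.-1 * i)%N = vecmx (rfactor d.-1) (a + r d.-1 * i)%N.
Proof. by rewrite /thm_cores gtn_eqF // eqxx /rfactor ltnn. Qed.

Lemma core_mid_entry m a i b : (0 < m)%N -> (m.+1 < d)%N ->
  (a < r m)%N -> (i < n m.+1)%N -> (b < r m.+1)%N ->
  G m.+1 (a + r m * i + r m * n m.+1 * b)%N =
  \sum_(0 <= c < Pn n m) (vecmx (U m) (c + Pn n m * a)%N)^* *
      vecmx (U m.+1) (c + Pn n m * i + Pn n m.+1 * b)%N.
Proof.
move=> m_gt0 ltmd lta lti ltb.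
rewrite /thm_cores gtn_eqF ?ltn_eqF // -mulnA -addnA -mulnDr vecmx_mulmx //;
  last exact: ltn_colmaj.
apply: eq_big_nat => c /andP[_ ltc].
rewrite vecmx_adjmx // vecmx_mxof //; last exact: ltn_colmaj.
by rewrite /= mulnDr mulnA addnA -PnS.
Qed.

Lemma rfactor_step m a i q : (0 < m)%N -> (m.+1 < d)%N ->
  (a < r m)%N -> (i < n m.+1)%N -> (q < Qn n d m.+1)%N ->
  \sum_(0 <= b < r m.+1)
     G m.+1 (a + r m * i + r m * n m.+1 * b)%N * vecmx (rfactor m.+1) (b + r m.+1 * q)%N =
  vecmx (rfactor m) (a + r m * (i + n m.+1 * q))%N.
Proof.
move=> m_gt0 ltmd lta lti ltq; have ltmd1 : (m < d.-1)%N by lia.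
rewrite rfactor_entry //; last by rewrite QnS ?ltn_colmaj // ltnW.
under eq_big_nat => b /andP[_ ltb] do rewrite core_mid_entry // big_distrl.
rewrite exchange_big_nat; apply: eq_big_nat => c /andP[_ ltc].
rewrite mulnDr mulnA addnA -PnS approx_entry //; last by rewrite PnS ltn_colmaj.
by rewrite big_distrr; apply: eq_big_nat => b _; rewrite /= mulrA.
Qed.

Definition pref L m a := vecmx (ttpref n s G L m) a.

Lemma tteval_pref L : tteval n s G d L = pref L d 0.
Proof.
rewrite /tteval /pref; move: (ttpref n s G L d); rewrite /rk eqxx orbT => A.
by rewrite big_ord1 -(vecmxE A ord0 ord0).
Qed.

Lemma pref0 L : pref L 0 0 = 1.
Proof. by rewrite /pref -[0%N]/(@ord0 0 + 1 * @ord0 0)%N vecmxE mxE. Qed.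

(* The rank is a parameter [k] because [s m] occurs in the type of [ttpref] and
   cannot be rewritten there. *)
Lemma pref_succ L m k b : s m = k -> (b < s m.+1)%N ->
  pref L m.+1 b =
  \sum_(0 <= a < k) pref L m a * G m.+1 (a + k * ttidx n L m.+1 + k * n m.+1 * b)%N.
Proof.
move=> <- ltb; rewrite /pref /= vecmx_mulmx_row //.
apply: eq_big_nat => a /andP[_ lta].
by rewrite (vecmxE _ (Ordinal lta) (Ordinal ltb)) mxE.
Qed.

Lemma pref_first L a : (a < r 1)%N ->
  pref L 1 a = vecmx (U 1) (L %% Pn n 1 + Pn n 1 * a)%N.
Proof.
move=> lta; rewrite (@pref_succ L 0 1); [|by []|by rewrite rk_mid ?d_gt1].
rewrite big_nat1 pref0 mul1r.
have -> : ttidx n L 1 = (L %% Pn n 1)%N by rewrite /ttidx /= Pn0 divn1 Pn1.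
by rewrite add0n !mul1n core_first_entry.
Qed.

Lemma tteval_split k m L : (0 < m)%N -> (m + k = d.-1)%N -> (L < Pn n d)%N ->
  tteval n s G d L =
  \sum_(0 <= a < r m) pref L m a * vecmx (rfactor m) (a + r m * (L %/ Pn n m))%N.
Proof.
move=> + + ltL; elim: k m => [|k IHk] m m_gt0 mk.
  rewrite addn0 in mk; subst m.
  have dm1_mid : (0 < d.-1 < d)%N by lia.
  have d_gt0 : (0 < d)%N by lia.
  rewrite tteval_pref -{1}(prednK d_gt0) (pref_succ L (rk_mid dm1_mid)); last first.
    by rewrite prednK // /rk eqxx orbT.
  rewrite prednK; last exact: d_gt0.
  apply: eq_big_nat => a _.
  by rewrite muln0 addn0 (ttidx_last d_gt0 ltL) core_last_entry.
have m_mid : (0 < m < d)%N by lia.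
have m1_mid : (0 < m.+1 < d)%N by lia.
have ltmd : (m.+1 < d)%N by lia.
rewrite (IHk m.+1) ?addSnnS // (divn_Pn_succ (ltnW ltmd) ltL).
set i := ttidx n L m.+1; set q := (L %/ Pn n m.+1)%N.
have lti : (i < n m.+1)%N := ltn_ttidx (ltnW ltmd) ltL.
have ltq : (q < Qn n d m.+1)%N := ltn_divn_Pn ltL (ltnW ltmd).
transitivity (\sum_(0 <= b < r m.+1) \sum_(0 <= a < r m)
   pref L m a * G m.+1 (a + r m * i + r m * n m.+1 * b)%N *
   vecmx (rfactor m.+1) (b + r m.+1 * q)%N).
  apply: eq_big_nat => b /andP[_ ltb].
  by rewrite (pref_succ L (rk_mid m_mid)) ?big_distrl ?rk_mid.
rewrite exchange_big_nat; apply: eq_big_nat => a /andP[_ lta].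
rewrite -(rfactor_step m_gt0 ltmd lta lti ltq) big_distrr.
by apply: eq_big_nat => b _; rewrite /= mulrA.
Qed.

Lemma tteval_approx1 L : (L < Pn n d)%N -> tteval n s G d L = approx 1 L.
Proof.
move=> ltL; have d2 : (1 + d.-2 = d.-1)%N by lia.
rewrite (tteval_split (ltn0Sn 0) d2 ltL).
have /andP[P1_gt0 _] := PnQn_gt0 ltL (ltnW d_gt1).
have {3}-> : L = (L %% Pn n 1 + Pn n 1 * (L %/ Pn n 1))%N.
  by rewrite addnC mulnC -divn_eq.
have le1d : (1 <= d.-1)%N by lia.
rewrite (approx_entry le1d (ltn_pmod _ P1_gt0) (ltn_divn_Pn ltL (ltnW d_gt1))).
by apply: eq_big_nat => a /andP[_ lta]; rewrite pref_first.
Qed.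

Section ErrorBound.
Variables (X : nat -> C) (c : C).
Hypothesis U_orthonormal : forall j, (1 <= j <= d.-1)%N -> adjmx (U j) *m U j = 1%:M.
Hypothesis unfolding_error : forall j, (1 <= j <= d.-1)%N ->
  frob2 (unfolding n d X j - U j *m adjmx (V j)) <= c.

Lemma sweep_error t : (t < d.-1)%N ->
  tnorm2 n d (fun L => X L - sweep t L) <= t.+1%:R * c.
Proof.
elim: t => [|t IHt] ltt.
  rewrite (tnorm2_unfolding _ _ (leq_pred d)) mxofB vecmxK mul1r.
  by apply: unfolding_error; rewrite leqnn andbT.
have m_range : (1 <= d.-1 - t.+1 <= d.-1)%N by lia.
have lemd : (d.-1 - t.+1 <= d)%N by lia.
rewrite (tnorm2_unfolding _ _ lemd) mxofB /= vecmxK.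
apply: le_trans (frob2_sub_proj (U_orthonormal m_range) _ _) _.
rewrite -natr1 mulrDl mul1r addrC lerD //.
  by rewrite -mxofB -(tnorm2_unfolding _ _ lemd) IHt // ltnW.
exact: le_trans (frob2_proj_min (U_orthonormal m_range) _ _) (unfolding_error m_range).
Qed.

Lemma ttsvd_error : tnorm2 n d (fun L => X L - tteval n s G d L) <= (d.-1)%:R * c.
Proof.
have -> : tnorm2 n d (fun L => X L - tteval n s G d L) =
          tnorm2 n d (fun L => X L - approx 1 L).
  by apply: eq_bigr => L _; rewrite tteval_approx1.
have := @sweep_error d.-2; rewrite /approx subn1 prednK; last by lia.
by apply; lia.
Qed.

End ErrorBound.

End TTSVD.

Unset Implicit Arguments.

Theorem theorem3p2 (C : numClosedFieldType) (d : nat) (n : nat -> nat)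
  (r : nat -> nat) (X : nat -> C) (eps : C)
  (U : forall j, 'M[C]_(Pn n j, r j)) (V : forall j, 'M[C]_(Qn n d j, r j)) :
  (2 <= d)%N -> 0 < eps -> eps < 1 ->
  (forall j, (1 <= j <= d.-1)%N ->
     adjmx (U j) *m U j = 1%:M /\
     frobmx (unfolding n d X j - U j *m adjmx (V j))
       <= eps / sqrtC (d.-1)%:R * frobT n d X) ->
  frobT n d (fun L => X L - tteval n (rk d r) (thm_cores U V) d L)
    <= eps * frobT n d X.
Proof.
move=> d_ge2 eps_gt0 _ hyp.
set F := frobT n d X; set e := eps / sqrtC (d.-1)%:R * F.
have F_ge0 : 0 <= F by rewrite /F frobTE sqrtC_ge0 tnorm2_ge0.
have e_ge0 : 0 <= e by rewrite /e mulr_ge0 // divr_ge0 ?sqrtC_ge0 ?ler0n // ltW.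
have unfolding_error j (hj : (1 <= j <= d.-1)%N) :
    frob2 (unfolding n d X j - U j *m adjmx (V j)) <= e ^+ 2.
  by rewrite -ler_sqrtC_sqr ?frob2_ge0 // -frobmxE (hyp j hj).2.
have := ttsvd_error d_ge2 (fun j hj => (hyp j hj).1) unfolding_error.
have -> : (d.-1)%:R * e ^+ 2 = (eps * F) ^+ 2.
  have d1_neq0 : (d.-1)%:R != 0 :> C by rewrite pnatr_eq0 -lt0n; lia.
  by rewrite /e !exprMn exprVn sqrtCK; field.
move=> err; rewrite frobTE ler_sqrtC_sqr ?tnorm2_ge0 //.
exact: mulr_ge0 (ltW eps_gt0) F_ge0.
Qed.
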